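(* Let $(X,T)$ be a minimal topological dynamical system with $X$ compact metrisable and $T$ abelian, with maximal equicontinuous factor map $\pi:X\to X_{max}$, and let $e$ be a minimal idempotent of its Ellis semigroup. Let $f\in\Gamma_e$ with $f\neq e$. Then $\emptyset\neq\mathrm{supp}(f)\subseteq X_{max}^{sing}$.
   Context: The Ellis semigroup $E$ is the closure of the set of homeomorphisms $\{\alpha^t:t\in T\}$ in $X^X$ (pointwise convergence, composition as product); $\ker E$ is its smallest two-sided ideal, minimal idempotents are idempotents of $\ker E$, $J_{min}$ is the set of them. ${\mathcal H}_e=eEe$ is the structure group and $\Gamma_e$ is the subgroup of ${\mathcal H}_e$ generated by $eJ_{min}e$. For $f\in{\mathcal H}_e$ and $\xi\in X_{max}$, $f$ acts trivially at $\xi$ if every point of $e(\pi^{-1}(\xi))$ is fixed by $f$; $\mathrm{supp}(f)$ is the set of $\xi\in X_{max}$ at which $f$ does not act trivially. Two points are proximal if $\inf_t d(\alpha^t x,\alpha^t y)=0$. A point $\xi\in X_{max}$ is regular if all points of $\pi^{-1}(\xi)$ are distal (proximal to no other point), and $X_{max}^{sing}$ is the set of non-regular (singular) points. *)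

From HB Require Import structures.
From mathcomp Require Import all_boot all_order all_algebra.
From mathcomp Require Import all_classical all_reals all_analysis.
Set Implicit Arguments. Unset Strict Implicit. Unset Printing Implicit Defensive.
Import Order.TTheory GRing.Theory Num.Theory.
Local Open Scope classical_set_scope.
Local Open Scope ring_scope.

Section Dyn.
Context {R : realType}.

(* An action of the abelian group T (written additively) on X by
   homeomorphisms t |-> alpha t (continuity of each alpha t, and the
   group laws, make each alpha t a homeomorphism with inverse alpha (-t)). *)
Definition is_action (T : zmodType) (X : topologicalType) (alpha : T -> X -> X) :=
  [/\ forall x, alpha 0 x = x,
      forall s t x, alpha (s + t) x = alpha s (alpha t x)
    & forall t, continuous (alpha t)].

Definition minimal_action (T : zmodType) (X : topologicalType) (alpha : T -> X -> X) :=
  forall x : X, closure (range (fun t => alpha t x)) = [set: X].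

Definition equicontinuous_action (T : zmodType) (Y : pseudoMetricType R)
    (gamma : T -> Y -> Y) :=
  forall eps : R, 0 < eps -> exists2 delta : R, 0 < delta &
    forall y z : Y, ball y delta z -> forall t, ball (gamma t y) eps (gamma t z).

Definition factor_map (T : zmodType) (X Y : topologicalType)
    (alpha : T -> X -> X) (gamma : T -> Y -> Y) (rho : X -> Y) :=
  [/\ continuous rho, (forall y, exists x, rho x = y)
    & forall t x, rho (alpha t x) = gamma t (rho x)].

Definition max_equicontinuous_factor (T : zmodType) (X : topologicalType)
    (alpha : T -> X -> X) (Xmax : pseudoMetricType R) (beta : T -> Xmax -> Xmax)
    (pi : X -> Xmax) :=
  [/\ hausdorff_space Xmax, compact [set: Xmax], is_action beta,
      equicontinuous_action beta & factor_map alpha beta pi] /\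
      forall (Y : pseudoMetricType R) (gamma : T -> Y -> Y) (rho : X -> Y),
        hausdorff_space Y -> compact [set: Y] -> is_action gamma ->
        equicontinuous_action gamma -> factor_map alpha gamma rho ->
        exists psi : Xmax -> Y, factor_map beta gamma psi /\ rho = psi \o pi.

Definition ellis (T : zmodType) (X : topologicalType) (alpha : T -> X -> X)
  : set (X -> X) :=
  @closure {ptws X -> X} (range alpha).

Definition two_sided_ideal (X : Type) (E I : set (X -> X)) :=
  [/\ I !=set0, I `<=` E,
      (forall g h, E g -> I h -> I (g \o h)) &
      (forall g h, I g -> E h -> I (g \o h))].

Definition kerE (X : Type) (E : set (X -> X)) : set (X -> X) :=
  \bigcap_(I in two_sided_ideal E) I.

Definition minimal_idempotent (X : Type) (E : set (X -> X)) (e : X -> X) :=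
  kerE E e /\ e \o e = e.

Definition Jmin (X : Type) (E : set (X -> X)) := [set e | minimal_idempotent E e].

Definition Hgrp (X : Type) (E : set (X -> X)) (e : X -> X) : set (X -> X) :=
  [set e \o g \o e | g in E].

Definition subgroup_H (X : Type) (E : set (X -> X)) (e : X -> X)
    (S : set (X -> X)) :=
  [/\ S `<=` Hgrp E e, S e,
      (forall f g, S f -> S g -> S (f \o g)) &
      (forall f g, S f -> Hgrp E e g -> g \o f = e -> S g)].

Definition Gamma (X : Type) (E : set (X -> X)) (e : X -> X) : set (X -> X) :=
  \bigcap_(S in [set S | subgroup_H E e S /\
                  [set e \o u \o e | u in Jmin E] `<=` S]) S.

Definition acts_trivially_at (X Xmax : Type) (pi : X -> Xmax) (e f : X -> X)
    (xi : Xmax) :=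
  forall x, pi x = xi -> f (e x) = e x.

Definition supp (X Xmax : Type) (pi : X -> Xmax) (e f : X -> X) : set Xmax :=
  [set xi | ~ acts_trivially_at pi e f xi].

Definition proximal (T : zmodType) (X : pseudoMetricType R) (alpha : T -> X -> X)
    (x y : X) :=
  forall eps : R, 0 < eps -> exists t, ball (alpha t x) eps (alpha t y).

Definition distal_point (T : zmodType) (X : pseudoMetricType R)
    (alpha : T -> X -> X) (x : X) :=
  forall y, proximal alpha x y -> y = x.

Definition regular_point (T : zmodType) (X : pseudoMetricType R)
    (alpha : T -> X -> X) (Xmax : Type) (pi : X -> Xmax) (xi : Xmax) :=
  forall x, pi x = xi -> distal_point alpha x.

Definition Xsing (T : zmodType) (X : pseudoMetricType R)
    (alpha : T -> X -> X) (Xmax : Type) (pi : X -> Xmax) : set Xmax :=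
  [set xi | ~ regular_point alpha pi xi].

End Dyn.

From HB Require Import structures.
From mathcomp Require Import all_boot all_order all_algebra.
From mathcomp Require Import all_classical all_reals all_analysis.
Import Order.TTheory GRing.Theory Num.Theory.
Local Open Scope classical_set_scope.
Local Open Scope ring_scope.

(* For an idempotent u of the Ellis semigroup, x and u x are always
   proximal, so idempotents fix distal points.  Over a regular point xi every
   element of J_min therefore fixes the fibre pi^-1(xi) pointwise; the
   pointwise stabiliser of that fibre in H_e is then a subgroup containing
   e J_min e, hence contains Gamma_e, and every f in Gamma_e acts trivially at
   xi.  Non-emptiness of the support is algebraic: an f in H_e = e E e
   satisfies f = f e, so if f fixes all of e(X) then f = e. *)

Section StructureGroup.
Context {X : Type} {E : set (X -> X)}.
Hypotheses (E_neq0 : E !=set0)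
  (E_comp : forall g h, E g -> E h -> E (g \o h)).

Lemma kerE_sub : kerE E `<=` E.
Proof. by move=> u; apply; split. Qed.

Lemma Hgrp_comp e f g : E e -> Hgrp E e f -> Hgrp E e g -> Hgrp E e (f \o g).
Proof.
move=> Ee [f' Ef' <-] [g' Eg' <-]; exists (f' \o e \o e \o g') => //.
by do 3 apply: E_comp => //.
Qed.

Definition Hstab (e : X -> X) (P : set X) : set (X -> X) :=
  [set h | Hgrp E e h /\ forall x, P x -> h x = x].

Section Stabilizer.
Context {e : X -> X} {P : set X}.
Hypotheses (eJ : Jmin E e) (Jmin_fix : forall u, Jmin E u -> forall x, P x -> u x = x).

Lemma subgroup_Hstab : subgroup_H E e (Hstab e P).
Proof.
have [/kerE_sub Ee ee] := eJ; have efix := Jmin_fix _ eJ.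
split.
- by move=> h [].
- by split; [exists e; rewrite ?ee | ].
- move=> h1 h2 [H1 fix1] [H2 fix2]; split; first exact: Hgrp_comp.
  by move=> x Px /=; rewrite fix2 // fix1.
- move=> h1 h2 [_ fix1] H2 h21e; split => // x Px.
  by rewrite -{1}(fix1 x Px) -[h2 (h1 x)]/((h2 \o h1) x) h21e efix.
Qed.

Lemma Gamma_sub_Hstab : Gamma E e `<=` Hstab e P.
Proof.
apply: bigcap_inf; split; first exact: subgroup_Hstab.
move=> _ [u uJ <-]; split; first by exists u => //; case: uJ => /kerE_sub.
by move=> x Px /=; rewrite !Jmin_fix.
Qed.

End Stabilizer.

Lemma Gamma_sub_Hgrp {e : X -> X} : Jmin E e -> Gamma E e `<=` Hgrp E e.
Proof.
by move=> eJ f /(@Gamma_sub_Hstab e set0 eJ (fun _ _ _ => False_ind _)) [].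
Qed.

End StructureGroup.

Lemma Hgrp_compe {X : Type} {E : set (X -> X)} {e f : X -> X} :
  e \o e = e -> Hgrp E e f -> f \o e = f.
Proof. by move=> ee [g _ <-]; rewrite -compA ee. Qed.

Lemma supp_neq0 {X Xmax : Type} (pi : X -> Xmax) {E : set (X -> X)} {e f : X -> X} :
  e \o e = e -> Hgrp E e f -> f <> e -> supp pi e f !=set0.
Proof.
move=> ee Hf fNe; apply: contrapT => supp0; apply: fNe.
rewrite -(Hgrp_compe ee Hf); apply: funext => x /=.
by apply: contrapT => fex; apply: supp0; exists (pi x) => /(_ x erefl).
Qed.

Section PointwiseTopology.
Context {U : topologicalType} {V : uniformType}.

Lemma ptws_continuous (W : topologicalType) (F : W -> {ptws U -> V}) :
  (forall u, continuous (fun w => F w u)) -> continuous F.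
Proof. by move=> Fc w; apply/pointwise_cvgP => u; exact: Fc. Qed.

Lemma ptws_continuous_compl (phi : V -> V) : continuous phi ->
  continuous (fun k : {ptws U -> V} => (phi \o k : {ptws U -> V})).
Proof.
move=> phic; apply: ptws_continuous => u k.
apply: (@continuous_comp _ _ _ (fun w : {ptws U -> V} => w u) phi) (phic _).
exact: proj_continuous.
Qed.

Lemma ptws_continuous_compr (h : U -> U) :
  continuous (fun k : {ptws U -> V} => (k \o h : {ptws U -> V})).
Proof. by apply: ptws_continuous => u k; exact: proj_continuous. Qed.

End PointwiseTopology.

Section Ellis.
Context {R : realType} {T : zmodType} {X : pseudoMetricType R}
  {alpha : T -> X -> X}.
Hypothesis act : is_action alpha.

Local Notation E := (ellis alpha).

Lemma ellis_sub_closed {C : set {ptws X -> X}} :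
  closed C -> range alpha `<=` C -> E `<=` C.
Proof. by move=> Ccl alphaC; rewrite /ellis closureE; exact: smallest_sub. Qed.

Lemma ellis_range t : E (alpha t).
Proof. by apply: subset_closure; exists t. Qed.

Lemma ellis_compl s h : E h -> E (alpha s \o h).
Proof.
have [_ alphaD alphac] := act.
have closed_pre : closed ((fun k : {ptws X -> X} => (alpha s \o k : {ptws X -> X})) @^-1` E).
  apply: preimage_closed; last exact: closed_closure.
  by move=> k _; apply: ptws_continuous_compl; exact: alphac.
apply: (ellis_sub_closed closed_pre) => _ [t _ <-] /=.
have -> : alpha s \o alpha t = alpha (s + t) by apply: funext => x; rewrite alphaD.
exact: ellis_range.
Qed.

Lemma ellis_comp g h : E g -> E h -> E (g \o h).
Proof.
move=> Eg Eh.
have closed_pre : closed ((fun k : {ptws X -> X} => (k \o h : {ptws X -> X})) @^-1` E).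
  apply: preimage_closed; last exact: closed_closure.
  by move=> k _; exact: ptws_continuous_compr.
by move: Eg; apply: (ellis_sub_closed closed_pre) => _ [t _ <-]; exact: ellis_compl.
Qed.

Lemma ellis_neq0 : E !=set0.
Proof. by exists (alpha 0); exact: ellis_range. Qed.

Lemma ellis_idempotent_proximal u x : E u -> u \o u = u -> proximal alpha x (u x).
Proof.
move=> Eu uu eps eps0; have eps20 : 0 < eps / 2 by rewrite divr_gt0.
have near_u y : nbhs (u : {ptws X -> X}) [set k | ball (u y) (eps / 2) (k y)].
  exact: (@proj_continuous _ _ y u _ (nbhsx_ballx _ _ eps20)).
have near_u2 := @filterI _ _ (nbhs_filter (u : {ptws X -> X})) _ _ (near_u x) (near_u (u x)).
have [_ [[t _ <-] [xball uxball]]] := Eu _ near_u2.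
exists t; rewrite (splitr eps); apply: ball_triangle (ball_sym xball) _.
by rewrite -[u (u x)]/((u \o u) x) uu in uxball.
Qed.

Lemma Jmin_fix_regular_fiber (Xmax : Type) (pi : X -> Xmax) xi u x :
  regular_point alpha pi xi -> Jmin E u -> pi x = xi -> u x = x.
Proof.
move=> reg [/(kerE_sub ellis_neq0 ellis_comp) Eu uu] pix.
by apply: (reg x pix); exact: ellis_idempotent_proximal.
Qed.

Lemma supp_sub_Xsing {Xmax : Type} (pi : X -> Xmax) {e f : X -> X} :
  Jmin E e -> Gamma E e f -> supp pi e f `<=` Xsing alpha pi.
Proof.
move=> eJ Gf xi fNtriv reg; apply: fNtriv => x pix.
have fiber_fix u : Jmin E u -> forall y, pi y = xi -> u y = y.
  by move=> uJ y; exact: Jmin_fix_regular_fiber.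
have [_ ffix] := Gamma_sub_Hstab ellis_neq0 ellis_comp eJ fiber_fix _ Gf.
by rewrite (fiber_fix e eJ x pix) ffix.
Qed.

End Ellis.

Theorem mainTheorem4 (R : realType) (T : zmodType) (X : pseudoMetricType R)
    (alpha : T -> X -> X) (Xmax : pseudoMetricType R) (beta : T -> Xmax -> Xmax)
    (pi : X -> Xmax) (e f : X -> X) :
  hausdorff_space X -> compact [set: X] ->
  is_action alpha -> minimal_action alpha ->
  max_equicontinuous_factor alpha beta pi ->
  minimal_idempotent (ellis alpha) e ->
  Gamma (ellis alpha) e f -> f <> e ->
  supp pi e f !=set0 /\ supp pi e f `<=` Xsing alpha pi.
Proof.
move=> _ _ act _ _ eJ Gf fNe; split; last apply: (supp_sub_Xsing act pi eJ Gf).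
have Hf := Gamma_sub_Hgrp ellis_neq0 (ellis_comp act) eJ _ Gf.
apply: (supp_neq0 pi eJ.2 Hf fNe).
Qed.
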